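(* Suppose $n\ge 1$, $0<q\le 1$ and $\pi\sim\mu_{n,q}$. Then $$n(1-q)\le \mathbb{E}(\mathrm{LIS}(\pi))\le n-\frac{q}{1+q}(n-1).$$
   Context: For $q>0$ and an integer $n\ge1$, the Mallows measure $\mu_{n,q}$ on $S_n$ is $\mu_{n,q}(\pi)=q^{\mathrm{inv}(\pi)}/Z_{n,q}$, where $\mathrm{inv}(\pi)$ is the number of pairs $i<j$ with $\pi(i)>\pi(j)$ and $Z_{n,q}$ is the normalizing constant (for $q=1$ this is the uniform measure). $\mathrm{LIS}(\pi)$ denotes the length of a longest increasing subsequence of $\pi$. *)

From HB Require Import structures.
From mathcomp Require Import all_boot all_order all_algebra all_fingroup.
Set Implicit Arguments. Unset Strict Implicit. Unset Printing Implicit Defensive.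
Import Order.TTheory GRing.Theory Num.Theory.

Definition inv n (s : 'S_n) : nat :=
  #|[set p : 'I_n * 'I_n | (p.1 < p.2)%N && (s p.2 < s p.1)%N]|.

Definition incr_subseq n (s : 'S_n) (A : {set 'I_n}) : bool :=
  [forall i in A, forall j in A, (i < j)%N ==> (s i < s j)%N].

Definition LIS n (s : 'S_n) : nat :=
  \max_(A : {set 'I_n} | incr_subseq s A) #|A|.

Local Open Scope ring_scope.

Definition mallowsZ (R : realFieldType) n (q : R) : R :=
  \sum_(s : 'S_n) q ^+ inv s.

Definition mallows (R : realFieldType) n (q : R) (s : 'S_n) : R :=
  q ^+ inv s / mallowsZ n q.

Definition expected_LIS (R : realFieldType) n (q : R) : R :=
  \sum_(s : 'S_n) mallows q s * (LIS s)%:R.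

From Pilot Require Import Defs.
From HB Require Import structures.
From mathcomp Require Import all_boot all_order all_algebra all_fingroup.
From mathcomp Require Import zify ring lra.
Import Order.TTheory GRing.Theory Num.Theory.
Set Implicit Arguments. Unset Strict Implicit. Unset Printing Implicit Defensive.

(* Both bounds come from a pointwise bound on LIS made linear in positions.
   Lower bound: the right-to-left minima (positions i with s i < s j for all
   j > i) form an increasing subsequence.  If i is not one, swapping i with the
   later position holding the largest value below s i removes exactly one
   inversion, and this map is injective; hence i fails to be a right-to-left
   minimum with Mallows probability at most q.
   Upper bound: an increasing subsequence meets each maximal descending run at
   most once, so LIS <= n - #descents.  Swapping positions k and k+1 exchanges
   ascents and descents at k and changes inv by one, so there is a descent at k
   with probability exactly q / (1 + q). *)

Lemma inv_sum n (s : 'S_n) :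
  Defs.inv s = \sum_(x : 'I_n) \sum_(y : 'I_n) ((x < y)%N && (s y < s x)%N : nat).
Proof.
rewrite /Defs.inv -sum1_card pair_big /= big_mkcond /=.
by apply: eq_bigr => p _; rewrite inE; case: ifP.
Qed.

Lemma perm_val_inj n (s : 'S_n) (a b : 'I_n) : a != b -> (s a : nat) != s b.
Proof. by apply: contra => /eqP /val_inj /perm_inj ->. Qed.

Lemma big_ord_split2 n (F : 'I_n -> nat) (i j : 'I_n) : i != j ->
  \sum_(x : 'I_n) F x = F i + F j + \sum_(x : 'I_n | (x != i) && (x != j)) F x.
Proof.
move=> nij; rewrite (bigD1 i) //= (bigD1 j) /=; last by rewrite eq_sym.
by rewrite addnA; congr (_ + _); apply: eq_bigl => x; rewrite andbC.
Qed.

Lemma big_pair_split2 n (F : 'I_n -> 'I_n -> nat) (i j : 'I_n) : i != j ->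
  \sum_(x : 'I_n) \sum_(y : 'I_n) F x y =
    F i i + F i j + F j i + F j j
  + \sum_(y : 'I_n | (y != i) && (y != j)) (F i y + F j y + F y i + F y j)
  + \sum_(x : 'I_n | (x != i) && (x != j))
      \sum_(y : 'I_n | (y != i) && (y != j)) F x y.
Proof.
move=> nij; rewrite (big_ord_split2 _ nij).
rewrite (eq_bigr _ (fun x _ => big_ord_split2 (F x) nij)).
rewrite (big_ord_split2 (F i) nij) (big_ord_split2 (F j) nij).
rewrite !big_split /=; lia.
Qed.

(* Inversions between a position c and the positions a < b, before (right)
   and after (left) exchanging the values sa > sb held at a and b. *)
Lemma swap_pair_count (a b c sa sb sc : nat) :
  (a < b)%N -> (sb < sa)%N -> c != a -> c != b -> sc != sa -> sc != sb ->
  ((a < c < b)%N -> (sc < sb)%N || (sa < sc)%N) ->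
  ((b < c) && (sc < sa) + (a < c) && (sc < sb)
    + (c < b) && (sa < sc) + (c < a) && (sb < sc))%N
  = ((a < c) && (sc < sa) + (b < c) && (sc < sb)
    + (c < a) && (sa < sc) + (c < b) && (sb < sc))%N.
Proof. by move=> *; repeat case: ltnP => ? /=; lia. Qed.

Lemma inv_tperm n (s : 'S_n) (i j : 'I_n) : (i < j)%N -> (s j < s i)%N ->
  (forall k : 'I_n, (i < k < j)%N -> (s k < s j)%N || (s i < s k)%N) ->
  (Defs.inv (tperm i j * s)%g).+1 = Defs.inv s.
Proof.
move=> lt_ij lt_sji between.
have nij : i != j by rewrite neq_ltn lt_ij.
rewrite !inv_sum (reindex_inj (inv_inj (tpermK i j))).
under eq_bigr => x _ do rewrite (reindex_inj (inv_inj (tpermK i j))).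
under eq_bigr => x _ do under eq_bigr => y _ do rewrite !permM !tpermK.
rewrite !(big_pair_split2 _ nij) !tpermL !tpermR !ltnn lt_ij lt_sji.
rewrite [(j < i)%N]ltnNge ltnW // [(s i < s j)%N]ltnNge ltnW //= !add0n.
rewrite !addn0 -addnA add1n; congr (_ + _).+1.
- apply: eq_bigr => y /andP[yi yj]; rewrite !tpermD 1?eq_sym //.
  apply: swap_pair_count => //; rewrite ?perm_val_inj //.
  exact: between.
- apply: eq_bigr => x /andP[xi xj]; apply: eq_bigr => y /andP[yi yj].
  by rewrite !tpermD 1?eq_sym.
Qed.

Definition rl_minimum n (s : 'S_n) (i : 'I_n) : bool :=
  [forall j : 'I_n, (i < j)%N ==> (s i < s j)%N].

Lemma rl_minima_le_LIS n (s : 'S_n) : #|[set i | rl_minimum s i]| <= LIS s.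
Proof.
apply: (leq_bigmax_cond (F := fun A : {set 'I_n} => #|A|)).
apply/forallP => i; apply/implyP; rewrite inE => /forallP min_i.
by apply/forallP => j; apply/implyP => _; apply: min_i.
Qed.

Section RightToLeftMinimum.
Variables (n : nat) (i : 'I_n).

(* Exchanging with this position removes exactly one inversion (inv_tperm). *)
Definition swap_partner (s : 'S_n) : 'I_n :=
  odflt i [pick j : 'I_n | (i < j)%N && (s j < s i)%N &&
     [forall l : 'I_n, ((i < l)%N && (s l < s i)%N) ==> (s l <= s j)%N]].

Lemma swap_partner_spec s : ~~ rl_minimum s i ->
  [/\ (i < swap_partner s)%N, (s (swap_partner s) < s i)%N &
      forall l : 'I_n, (i < l)%N -> (s l < s i)%N -> (s l <= s (swap_partner s))%N].
Proof.
rewrite /swap_partner; case: pickP => [j /andP[/andP[ij sji] /forallP max_j] | none].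
  by move=> _; split=> // l il sli; move/implyP: (max_j l); apply; rewrite il.
rewrite negb_forall => /existsP[j0]; rewrite negb_imply -leqNgt => /andP[ij0 sij0].
have sj0 : (s j0 < s i)%N.
  by rewrite ltn_neqAle sij0 andbT perm_val_inj // neq_ltn ij0 orbT.
have [|m /andP[im smi] max_m] :=
  @arg_maxnP _ j0 (fun j => (i < j)%N && (s j < s i)%N) (fun j => s j).
  by rewrite ij0 sj0.
move/negP: (none m); rewrite im smi; case.
by apply/forallP => l; apply/implyP => /andP[il sli]; apply: max_m; rewrite il.
Qed.

Definition rl_swap (s : 'S_n) : 'S_n := (tperm i (swap_partner s) * s)%g.

Lemma inv_rl_swap s : ~~ rl_minimum s i -> (Defs.inv (rl_swap s)).+1 = Defs.inv s.
Proof.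
move=> /swap_partner_spec[ij sji max_j]; apply: inv_tperm => // k /andP[ik kj].
have ki : k != i by rewrite neq_ltn ik orbT.
have kj' : k != swap_partner s by rewrite neq_ltn kj.
have := perm_val_inj s kj'; have := perm_val_inj s ki.
case: (ltnP (s k) (s i)) => ski; last by lia.
by have := max_j k ik ski; lia.
Qed.

Lemma rl_swap_spec s : ~~ rl_minimum s i ->
  [/\ (i < swap_partner s)%N, (rl_swap s i < rl_swap s (swap_partner s))%N &
      forall l : 'I_n, (i < l)%N -> (rl_swap s i < rl_swap s l)%N ->
        (rl_swap s (swap_partner s) <= rl_swap s l)%N].
Proof.
move=> /swap_partner_spec[ij sji max_j].
rewrite /rl_swap !permM tpermL tpermR; split => // l il.
have li : l != i by rewrite neq_ltn il orbT.
case: (eqVneq l (swap_partner s)) => [-> | lj]; rewrite permM ?tpermR //.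
rewrite tpermD 1?eq_sym //.
have := perm_val_inj s li; case: (ltnP (s l) (s i)) => sli; last by lia.
by have := max_j l il sli; lia.
Qed.

Lemma rl_swap_inj : {in [pred s | ~~ rl_minimum s i] &, injective rl_swap}.
Proof.
move=> s1 s2 /rl_swap_spec[i_j1 lt1 min1] /rl_swap_spec[i_j2 lt2 min2] e.
rewrite e in lt1 min1.
have e_j : swap_partner s1 = swap_partner s2.
  apply: (perm_inj (s := rl_swap s2)); apply: val_inj; apply/eqP.
  by rewrite eqn_leq min1 ?min2.
by move: e; rewrite /rl_swap e_j => /mulgI.
Qed.

End RightToLeftMinimum.

Definition descent n (s : 'S_n.+1) (k : 'I_n.+1) : bool :=
  (k < n)%N && (s (inord k.+1) < s k)%N.

Section DescendingRuns.
Variables (n : nat) (s : 'S_n.+1).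

Definition run_end (a : 'I_n.+1) : 'I_n.+1 :=
  [arg min_(k < ord_max | (a <= k)%N && ~~ descent s k) (k : nat)].

Lemma run_end_spec (a : 'I_n.+1) : [/\ (a <= run_end a)%N, ~~ descent s (run_end a) &
  forall x : 'I_n.+1, (a <= x <= run_end a)%N -> (s x <= s a)%N].
Proof.
rewrite /run_end; case: arg_minnP => [|m /andP[am ndm] min_m].
  by rewrite leq_ord /descent ltnn.
split => // x /andP[ax xm].
suff run_desc d : (a + d <= m)%N -> (s (inord (a + d)) <= s a)%N.
  by have := run_desc (x - a)%N; rewrite subnKC // inord_val; apply.
elim: d => [|d IH] adm; first by rewrite addn0 inord_val.
have ad_lt : (a + d < n.+1)%N by have := ltn_ord m; lia.
have ad_desc : descent s (inord (a + d)).
  apply/negPn/negP => nd; have := min_m (inord (a + d)).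
  by rewrite inordK // leq_addr nd => /(_ isT); lia.
move: ad_desc; rewrite /descent inordK // => /andP[_ lt]; rewrite addnS.
have le_ad : (a + d <= m)%N by lia.
by apply: leq_trans (IH le_ad); apply: ltnW.
Qed.

Lemma run_end_inj (A : {set 'I_n.+1}) : incr_subseq s A -> {in A &, injective run_end}.
Proof.
move=> incA.
have lt_run_end a1 a2 : a1 \in A -> a2 \in A -> (a1 < a2)%N -> run_end a1 != run_end a2.
  move=> A1 A2 lt12; apply/eqP => e.
  have [_ _ dec1] := run_end_spec a1; have [le2 _ _] := run_end_spec a2.
  have := dec1 a2; rewrite (ltnW lt12) e le2 => /(_ isT).
  have := forallP incA a1; rewrite A1 /= => /forallP /(_ a2); rewrite A2 lt12 /=.
  lia.
move=> a1 a2 A1 A2 e; case: (ltngtP a1 a2) => [lt|lt|/val_inj //].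
- by have := lt_run_end _ _ A1 A2 lt; rewrite e eqxx.
- by have := lt_run_end _ _ A2 A1 lt; rewrite e eqxx.
Qed.

Lemma LIS_add_descents_le : (LIS s + #|[set k | descent s k]| <= n.+1)%N.
Proof.
have le_LIS : (LIS s <= #|~: [set k | descent s k]|)%N.
  apply/bigmax_leqP => A incA; rewrite -(card_in_imset (run_end_inj incA)).
  apply/subset_leq_card/subsetP => _ /imsetP[a _ ->]; rewrite !inE.
  by have [] := run_end_spec a.
by have := cardsC [set k | descent s k]; rewrite card_ord; lia.
Qed.

End DescendingRuns.

Local Open Scope ring_scope.

Lemma sum_mul_card (R : pzSemiRingType) (I J : finType) (F : I -> R) (P : I -> J -> bool) :
  \sum_(x : I) F x * #|[set j | P x j]|%:R = \sum_(j : J) \sum_(x | P x j) F x.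
Proof.
under [RHS]eq_bigr => j _ do rewrite big_mkcond /=.
rewrite [RHS]exchange_big /=; apply: eq_bigr => x _.
rewrite -sum1_card natr_sum mulr_sumr big_mkcond /=; apply: eq_bigr => j _.
by rewrite inE; case: (P x j); rewrite ?mulr1 ?mulr0.
Qed.

Lemma mallowsZ_gt0 (R : realFieldType) n (q : R) : 0 < q -> 0 < mallowsZ n q.
Proof.
move=> q_gt0; rewrite /mallowsZ (bigD1 1%g) //= ltr_wpDr ?exprn_gt0 //.
by apply: sumr_ge0 => s _; rewrite exprn_ge0 ?ltW.
Qed.

Lemma expected_LISE (R : realFieldType) n (q : R) :
  expected_LIS n q = (\sum_(s : 'S_n) q ^+ Defs.inv s * (LIS s)%:R) / mallowsZ n q.
Proof.
by rewrite /expected_LIS mulr_suml; apply: eq_bigr => s _; rewrite mulrAC.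
Qed.

Section MallowsWeights.
Variables (R : realFieldType) (q : R).
Hypothesis q_ge0 : 0 <= q.

Lemma sum_weight_shift_le n (P : pred 'S_n) (f : 'S_n -> 'S_n) :
  {in P &, injective f} -> {in P, forall s, (Defs.inv (f s)).+1 = Defs.inv s} ->
  \sum_(s in P) q ^+ Defs.inv s <= q * mallowsZ n q.
Proof.
move=> f_inj f_inv.
rewrite (eq_bigr (fun s => q * q ^+ Defs.inv (f s))) => [|s Ps]; last first.
  by rewrite -f_inv // exprS.
rewrite -mulr_sumr ler_wpM2l // -(big_imset (fun s => q ^+ Defs.inv s) f_inj) /=.
rewrite /mallowsZ [X in _ <= X](bigID [in f @: P]) /= lerDl.
by apply: sumr_ge0 => s _; rewrite exprn_ge0.
Qed.

Lemma sum_weight_rl_minimum_ge n (i : 'I_n) :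
  (1 - q) * mallowsZ n q <= \sum_(s | rl_minimum s i) q ^+ Defs.inv s.
Proof.
have split_Z : mallowsZ n q = \sum_(s | rl_minimum s i) q ^+ Defs.inv s
    + \sum_(s | ~~ rl_minimum s i) q ^+ Defs.inv s by apply: bigID.
have := sum_weight_shift_le (@rl_swap_inj n i) (@inv_rl_swap n i).
rewrite split_Z; lra.
Qed.

Lemma sum_weight_LIS_ge n :
  n%:R * (1 - q) * mallowsZ n q <= \sum_(s : 'S_n) q ^+ Defs.inv s * (LIS s)%:R.
Proof.
apply: le_trans
  (_ : _ <= \sum_(s : 'S_n) q ^+ Defs.inv s * #|[set i | rl_minimum s i]|%:R) _.
  rewrite sum_mul_card -mulrA mulr_natl -[in X in _ *+ X](card_ord n) -sumr_const.
  by apply: ler_sum => i _; apply: sum_weight_rl_minimum_ge.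
apply: ler_sum => s _; rewrite ler_wpM2l ?exprn_ge0 // ler_nat.
exact: rl_minima_le_LIS.
Qed.

Lemma sum_weight_descent n (k : 'I_n.+1) : (k < n)%N ->
  \sum_(s | descent s k) q ^+ Defs.inv s = q * \sum_(s | ~~ descent s k) q ^+ Defs.inv s.
Proof.
move=> kn; set j : 'I_n.+1 := inord k.+1.
have jE : j = k.+1 :> nat by rewrite inordK.
have kj : k != j by rewrite -val_eqE /= jE neq_ltn ltnSn.
have desc_tperm s : descent (tperm k j * s)%g k = ~~ descent s k.
  rewrite /descent -/j kn /= !permM tpermL tpermR.
  by have := perm_val_inj s kj; lia.
rewrite (reindex_inj (mulgI (tperm k j))) mulr_sumr /=.
apply: eq_big => s; first by rewrite desc_tperm.
rewrite desc_tperm => nd; rewrite -exprS -[in RHS](mul1g s) -(tperm2 k j) -mulgA.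
rewrite inv_tperm // ?jE // ?permM ?tpermL ?tpermR.
- by move: nd (perm_val_inj s kj); rewrite /descent -/j kn /=; lia.
- by move=> x /andP[kx xk]; lia.
Qed.

Lemma sum_weight_descent_eq n (k : 'I_n.+1) : (k < n)%N ->
  \sum_(s | descent s k) q ^+ Defs.inv s = q / (1 + q) * mallowsZ n.+1 q.
Proof.
move=> kn; have q1_neq0 : 1 + q != 0 by rewrite gt_eqF // ltr_wpDr.
have -> : mallowsZ n.+1 q = \sum_(s | descent s k) q ^+ Defs.inv s
    + \sum_(s | ~~ descent s k) q ^+ Defs.inv s by apply: bigID.
by rewrite sum_weight_descent //; field.
Qed.

Lemma sum_weight_LIS_le n :
  \sum_(s : 'S_n.+1) q ^+ Defs.inv s * (LIS s)%:R
    <= ((n.+1)%:R - q / (1 + q) * n%:R) * mallowsZ n.+1 q.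
Proof.
have sum_descents : \sum_(s : 'S_n.+1) q ^+ Defs.inv s * #|[set k | descent s k]|%:R
    = q / (1 + q) * n%:R * mallowsZ n.+1 q.
  rewrite sum_mul_card big_ord_recr /= [X in _ + X]big_pred0 => [|s]; last first.
    by rewrite /descent /= ltnn.
  rewrite addr0 (eq_bigr _ (fun k _ =>
    @sum_weight_descent_eq n (widen_ord (leqnSn n) k) (ltn_ord k))).
  by rewrite sumr_const card_ord [RHS]mulrAC mulr_natr.
rewrite mulrBl -sum_descents /mallowsZ mulr_sumr -sumrB; apply: ler_sum => s _.
rewrite [_%:R * _]mulrC -mulrBr ler_wpM2l ?exprn_ge0 // lerBrDr -natrD ler_nat.
exact: LIS_add_descents_le.
Qed.

End MallowsWeights.

Unset Implicit Arguments.

Theorem proposition1p4 (R : realFieldType) (n : nat) (q : R) :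
  (1 <= n)%N -> 0 < q -> q <= 1 ->
  n%:R * (1 - q) <= expected_LIS n q /\
  expected_LIS n q <= n%:R - q / (1 + q) * (n.-1)%:R.
Proof.
move=> + q_gt0 _; case: n => [//|n] _ /=.
have q_ge0 := ltW q_gt0.
rewrite expected_LISE ler_pdivlMr ?ler_pdivrMr ?mallowsZ_gt0 //.
by split; [apply: sum_weight_LIS_ge | apply: sum_weight_LIS_le].
Qed.
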